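(* Let $k$ be any field and let $f_1,\ldots,f_r$ be homogeneous polynomials (forms) in $k[x,y]$ of degrees $d_1\ge d_2\ge\cdots\ge d_r$ such that the ideal $(f_1,\ldots,f_r)$ is minimally generated by $f_1,\ldots,f_r$. Then, coefficientwise, $$\big(k[x,y]/(f_1,\ldots,f_r)\big)(z)\;\le\;\frac{1+z+\cdots+z^{d_r-1}-\big(z^{d_{r-1}}+z^{d_{r-2}}+\cdots+z^{d_1}\big)}{1-z}.$$
   Context: For a graded $k$-algebra $R=\bigoplus_{i\ge0}R_i$ with finite-dimensional graded pieces, its Hilbert series is $R(z)=\sum_{i\ge0}\dim_k R_i\,z^i$. Here $x,y$ have degree $1$. For power series $A(z)=\sum a_iz^i$, $B(z)=\sum b_iz^i$, $A\le B$ coefficientwise means $a_i\le b_i$ for all $i$. *)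

From HB Require Import structures.
From mathcomp Require Import all_boot all_order all_algebra.
From Stdlib Require Import ClassicalEpsilon.
Set Implicit Arguments. Unset Strict Implicit. Unset Printing Implicit Defensive.
Import Order.TTheory GRing.Theory Num.Theory.
Local Open Scope ring_scope.

(* k[x,y] is modelled as {poly {poly k}}: polynomials in y whose
   coefficients are polynomials in x. *)
Notation bipoly k := {poly {poly k}}.

Definition coef2 (k : fieldType) (p : bipoly k) (a b : nat) : k := (p`_b)`_a.

(* p is a form (homogeneous polynomial) of degree d (0 is homogeneous of any degree) *)
Definition homogeneous (k : fieldType) (d : nat) (p : bipoly k) : Prop :=
  forall a b : nat, coef2 p a b != 0 -> (a + b)%N = d.

Definition in_ideal (k : fieldType) (n : nat) (P : pred 'I_n)
  (f : 'I_n -> bipoly k) (h : bipoly k) : Prop :=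
  exists g : 'I_n -> bipoly k, h = \sum_(j < n | P j) g j * f j.

Definition minimally_generated (k : fieldType) (n : nat) (f : 'I_n -> bipoly k) : Prop :=
  forall i : 'I_n, ~ in_ideal (fun j => j != i) f (f i).

Definition form_coords (k : fieldType) (i : nat) (h : bipoly k) : 'rV[k]_(i.+1) :=
  \row_(j < i.+1) coef2 h (i - j) j.

Definition ideal_part (k : fieldType) (n : nat) (f : 'I_n -> bipoly k) (i : nat)
  (v : 'rV[k]_(i.+1)) : Prop :=
  exists h, homogeneous i h /\ in_ideal predT f h /\ form_coords i h = v.

Definition ideal_part_space (k : fieldType) (n : nat) (f : 'I_n -> bipoly k) (i : nat)
  : {vspace 'rV[k]_(i.+1)} :=
  epsilon (inhabits 0%VS) (fun U : {vspace 'rV[k]_(i.+1)} =>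
     forall v : 'rV[k]_(i.+1), v \in U <-> ideal_part f v).

(* dim_k (k[x,y]/I)_i = dim R_i - dim I_i = (i+1) - dim I_i *)
Definition hilbert_fun (k : fieldType) (n : nat) (f : 'I_n -> bipoly k) (i : nat) : nat :=
  (i.+1 - \dim (ideal_part_space f i))%N.

(* numerator 1 + z + ... + z^(d_r - 1) - (z^(d_(r-1)) + ... + z^(d_1)),
   generators indexed by 'I_r.+1 with ord_max the last one (degree d_r) *)
Definition bound_numerator (r : nat) (d : 'I_r.+1 -> nat) : {poly int} :=
  \sum_(m < d ord_max) 'X^m - \sum_(j < r.+1 | j != ord_max) 'X^(d j).

(* coefficient of z^i in N(z)/(1-z) = N(z) (1 + z + z^2 + ...) *)
Definition bound_coef (r : nat) (d : 'I_r.+1 -> nat) (i : nat) : int :=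
  \sum_(m < i.+1) (bound_numerator d)`_m.

From HB Require Import structures.
From mathcomp Require Import all_boot all_order all_algebra.
From Stdlib Require Import ClassicalEpsilon Classical.
From mathcomp Require Import zify.
Set Implicit Arguments. Unset Strict Implicit. Unset Printing Implicit Defensive.
Import Order.TTheory GRing.Theory Num.Theory.
Local Open Scope ring_scope.

(* Write I_t for the degree-t part of I = (f_1, ..., f_r).  Multiplication by
   x and by y maps I_t into the forms of degree t+1 generated by the f_j of
   degree at most t; on coordinate vectors these maps pad on the right and on
   the left, so x I_t + y I_t has dimension at least dim I_t + 1 when
   I_t <> 0.  By minimality, the generators of degree t+1 are independent
   modulo that space.  Hence
     dim I_(t+1) >= dim I_t + [I_t <> 0] + #{j : d_j = t+1},
   and induction gives dim I_t >= #{j < r : d_j <= t} + max(0, t+1-d_r),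
   which is the bound read off coefficientwise. *)

Section VspaceOfPred.
Variables (K : fieldType) (vT : vectType K).

Lemma dimv_addv_gt (U V : {vspace vT}) :
  ~~ (V <= U)%VS -> (\dim U < \dim (U + V))%N.
Proof.
by move=> nVU; rewrite (ltn_leqif (dimv_leqif_sup (addvSl U V))) subv_add subvv.
Qed.

Lemma vspace_of_pred (P : vT -> Prop) :
  P 0 -> (forall a u v, P u -> P v -> P (a *: u + v)) ->
  exists U : {vspace vT}, forall v, v \in U <-> P v.
Proof.
move=> P0 Plin.
suff grow m (U : {vspace vT}) : (forall v, v \in U -> P v) ->
    (\dim {:vT} <= \dim U + m)%N ->
    exists U : {vspace vT}, forall v, v \in U <-> P v.
  apply: (grow (\dim {:vT}) 0%VS); last by rewrite leq_addl.
  by move=> v; rewrite memv0 => /eqP ->.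
elim: m U => [|m IHm] U UP dimU.
  have /eqP Uf : U == fullv by rewrite eqEdim subvf -(addn0 (\dim U)).
  by exists U => v; split=> [/UP //|_]; rewrite Uf memvf.
have [maxU|] := classic (forall v, P v -> v \in U).
  by exists U => v; split; [apply: UP | apply: maxU].
move=> /not_all_ex_not [v /(imply_to_and (P v)) [Pv vU]].
apply: (IHm (U + <[v]>)%VS).
  move=> _ /memv_addP [u Uu [_ /vlineP [c ->] ->]].
  by rewrite addrC; apply: Plin => //; apply: UP.
have : ~~ (<[v]> <= U)%VS by rewrite -memvE; apply/negP.
by move/dimv_addv_gt; lia.
Qed.

End VspaceOfPred.

Section RowPad.
Variables (K : fieldType) (n : nat).
Implicit Types (v w : 'rV[K]_n.+1) (W : {vspace 'rV[K]_n.+1}).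

(* In the monomial basis x^(t-j) y^j, multiplying a form by x pads its
   coordinate vector with a zero on the right, multiplying by y on the left. *)
Definition row_padr v : 'rV[K]_n.+2 :=
  \row_(j < n.+2) (if (j < n.+1)%N then v ord0 (inord j) else 0).
Definition row_padl v : 'rV[K]_n.+2 :=
  \row_(j < n.+2) (if (0 < j)%N then v ord0 (inord j.-1) else 0).

Fact row_padr_is_linear : linear row_padr.
Proof.
move=> a u v; apply/rowP => j; rewrite !mxE.
by case: ifP; rewrite ?mxE ?mulr0 ?addr0.
Qed.
HB.instance Definition _ :=
  GRing.isLinear.Build K 'rV_n.+1 'rV_n.+2 _ row_padr row_padr_is_linear.

Fact row_padl_is_linear : linear row_padl.
Proof.
move=> a u v; apply/rowP => j; rewrite !mxE.
by case: ifP; rewrite ?mxE ?mulr0 ?addr0.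
Qed.
HB.instance Definition _ :=
  GRing.isLinear.Build K 'rV_n.+1 'rV_n.+2 _ row_padl row_padl_is_linear.

Lemma row_padr_inj : injective row_padr.
Proof.
move=> v w /rowP vw; apply/rowP => j; have := vw (widen_ord (leqnSn _) j).
by rewrite !mxE /= ltn_ord inord_val.
Qed.

Lemma row_padl_padr_coef v w (j : 'I_n.+1) : row_padl v = row_padr w ->
  v ord0 j = if (j < n)%N then w ord0 (inord j.+1) else 0.
Proof.
move=> /rowP /(_ (lift ord0 j)); rewrite !mxE /= inord_val ltnS.
by case: ltnP => // _; rewrite inordK.
Qed.

(* If row_padl w = row_padr w', the last nonzero coordinate of w' lies one
   place to the right of that of w; iterating inside W pushes it past the end. *)
Lemma row_padl_sub_padr W :
  (linfun row_padl @: W <= linfun row_padr @: W)%VS -> W = 0%VS.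
Proof.
move=> /subvP padlW.
suff top0 m w (j : 'I_n.+1) : w \in W -> (n < j + m)%N -> w ord0 j = 0.
  apply/vspaceP => w; rewrite memv0; apply/idP/eqP => [Ww|->]; last exact: mem0v.
  by apply/rowP => j; rewrite mxE (top0 n.+1) //; lia.
elim: m w j => [|m IHm] w j Ww ltnj; first by have := ltn_ord j; lia.
have /memv_imgP [w' Ww'] := padlW _ (memv_img (linfun row_padl) Ww).
rewrite !lfunE /= => /row_padl_padr_coef ->; case: ltnP => // ltjn.
by apply: IHm; rewrite ?inordK //; lia.
Qed.

Lemma dimv_padr_padl W :
  (\dim W + (0 < \dim W) <= \dim (linfun row_padr @: W + linfun row_padl @: W))%N.
Proof.
have dim_padr : \dim (linfun row_padr @: W) = \dim W.
  apply: limg_dim_eq; have /eqP -> : lker (linfun row_padr) == 0%VS.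
    by apply/lker0P => v w; rewrite !lfunE; apply: row_padr_inj.
  exact: capv0.
have [->|W_gt0] := posnP; first exact: leq0n.
rewrite addn1 -dim_padr; apply: dimv_addv_gt; apply/negP => /row_padl_sub_padr W0.
by move: W_gt0; rewrite W0 dimv0.
Qed.

End RowPad.
Arguments row_padr {K n}.
Arguments row_padl {K n}.

Section Forms.
Variable k : fieldType.
Implicit Types (p q h : bipoly k) (t : nat).

Definition polyx : bipoly k := 'X%:P.
Definition polyy : bipoly k := 'X.

Lemma coef2_inj p q : (forall a b, coef2 p a b = coef2 q a b) -> p = q.
Proof. by move=> pq; apply/polyP => b; apply/polyP => a; apply: pq. Qed.

Lemma coef20 a b : coef2 (0 : bipoly k) a b = 0.
Proof. by rewrite /coef2 !coef0. Qed.

Lemma coef2D p q a b : coef2 (p + q) a b = coef2 p a b + coef2 q a b.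
Proof. by rewrite /coef2 !coefD. Qed.

Lemma coef2CM (c : k) p a b : coef2 (c%:P%:P * p) a b = c * coef2 p a b.
Proof. by rewrite /coef2 !coefCM. Qed.

Lemma coef2xM p a b :
  coef2 (polyx * p) a b = if (0 < a)%N then coef2 p a.-1 b else 0.
Proof. by rewrite /coef2 coefCM coefXM; case: a. Qed.

Lemma coef2yM p a b :
  coef2 (polyy * p) a b = if (0 < b)%N then coef2 p a b.-1 else 0.
Proof. by rewrite /coef2 coefXM; case: b => //=; rewrite coef0. Qed.

Lemma coef2M p q a b : coef2 (p * q) a b =
  \sum_(j < b.+1) \sum_(i < a.+1) coef2 p i j * coef2 q (a - i) (b - j).
Proof.
by rewrite /coef2 coefM coef_sum; apply: eq_bigr => j _; rewrite coefM.
Qed.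

Lemma homogeneous_coef2_eq0 t p a b :
  homogeneous t p -> (a + b)%N != t -> coef2 p a b = 0.
Proof. by move=> tp; apply: contraNeq => /tp ->. Qed.

Lemma homogeneous0 t : homogeneous t (0 : bipoly k).
Proof. by move=> a b; rewrite coef20 eqxx. Qed.

Lemma homogeneousD t p q :
  homogeneous t p -> homogeneous t q -> homogeneous t (p + q).
Proof.
move=> tp tq a b; rewrite coef2D; have [//|abt] := eqVneq (a + b)%N t.
by rewrite (homogeneous_coef2_eq0 tp) // (homogeneous_coef2_eq0 tq) // addr0 eqxx.
Qed.

Lemma homogeneousCM t (c : k) p : homogeneous t p -> homogeneous t (c%:P%:P * p).
Proof.
move=> tp a b; rewrite coef2CM => cp; apply: tp.
by apply: contra_neq cp => ->; rewrite mulr0.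
Qed.

Lemma homogeneous_xM t p : homogeneous t p -> homogeneous t.+1 (polyx * p).
Proof. by move=> tp [|a] b; rewrite coef2xM ?eqxx // => /tp <-. Qed.

Lemma homogeneous_yM t p : homogeneous t p -> homogeneous t.+1 (polyy * p).
Proof.
by move=> tp a [|b]; rewrite coef2yM ?eqxx // => /tp <-; rewrite addnS.
Qed.

Lemma form_coords_inj t p q : homogeneous t p -> homogeneous t q ->
  form_coords t p = form_coords t q -> p = q.
Proof.
move=> tp tq /rowP pq; apply: coef2_inj => a b.
have [abt|abt] := eqVneq (a + b)%N t; last first.
  by rewrite (homogeneous_coef2_eq0 tp) // (homogeneous_coef2_eq0 tq).
have ltbt : (b < t.+1)%N by lia.
by have := pq (Ordinal ltbt); rewrite !mxE /= -abt addnK.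
Qed.

Lemma form_coords0 t : form_coords t (0 : bipoly k) = 0.
Proof. by apply/rowP => j; rewrite !mxE coef20. Qed.

Lemma form_coordsD t p q :
  form_coords t (p + q) = form_coords t p + form_coords t q.
Proof. by apply/rowP => j; rewrite !mxE coef2D. Qed.

Lemma form_coordsCM t (c : k) p :
  form_coords t (c%:P%:P * p) = c *: form_coords t p.
Proof. by apply/rowP => j; rewrite !mxE coef2CM. Qed.

Lemma form_coords_xM t p :
  form_coords t.+1 (polyx * p) = row_padr (form_coords t p).
Proof.
apply/rowP => j; rewrite !mxE coef2xM subn_gt0 ltnS.
by case: ifP => // ltjt; rewrite inordK // subSn.
Qed.

Lemma form_coords_yM t p :
  form_coords t.+1 (polyy * p) = row_padl (form_coords t p).
Proof.
apply/rowP => j; rewrite !mxE coef2yM; case: ifP => // j_gt0.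
by rewrite inordK; [congr coef2; lia | have := ltn_ord j; lia].
Qed.

Definition hcomp t p : bipoly k :=
  \poly_(b < t.+1) \poly_(a < t.+1) (if (a + b == t)%N then coef2 p a b else 0).

Lemma coef2_hcomp t p a b :
  coef2 (hcomp t p) a b = if (a + b == t)%N then coef2 p a b else 0.
Proof.
rewrite /coef2 coef_poly; case: ltnP => ltbt.
  by rewrite coef_poly; case: ltnP => // leta; case: eqP => //; lia.
by rewrite coef0; case: eqP => //; lia.
Qed.

Lemma hcompD t p q : hcomp t (p + q) = hcomp t p + hcomp t q.
Proof.
apply: coef2_inj => a b; rewrite coef2D !coef2_hcomp coef2D.
by case: ifP; rewrite ?addr0.
Qed.

Lemma hcomp0 t : hcomp t 0 = 0.
Proof. by apply: coef2_inj => a b; rewrite coef2_hcomp coef20; case: ifP. Qed.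

Lemma hcomp_id t p : homogeneous t p -> hcomp t p = p.
Proof.
move=> tp; apply: coef2_inj => a b; rewrite coef2_hcomp.
by case: ifPn => // /(homogeneous_coef2_eq0 tp) ->.
Qed.

Lemma hcompMr e t p q : homogeneous e q ->
  hcomp t (p * q) = if (e <= t)%N then hcomp (t - e) p * q else 0.
Proof.
move=> eq_q; apply: coef2_inj => a b; rewrite coef2_hcomp.
have qE (i : 'I_a.+1) (j : 'I_b.+1) :
    (i + j + e != a + b)%N -> coef2 q (a - i) (b - j) = 0.
  move=> ne; apply: (homogeneous_coef2_eq0 eq_q); move: ne.
  by have := ltn_ord i; have := ltn_ord j; lia.
have [le_et|lt_te] := leqP e t; last first.
  rewrite coef20; case: eqP => // abt; rewrite coef2M.
  by apply: big1 => j _; apply: big1 => i _; rewrite qE ?mulr0 //; lia.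
rewrite !coef2M; case: eqP => abt.
  apply: eq_bigr => j _; apply: eq_bigr => i _; rewrite coef2_hcomp.
  by case: eqP => ijt //; rewrite qE ?mulr0 //; lia.
symmetry; apply: big1 => j _; apply: big1 => i _; rewrite coef2_hcomp.
by case: eqP => ijt; rewrite ?mul0r // qE ?mulr0 //; lia.
Qed.

End Forms.

Section Ideal.
Variables (k : fieldType) (n : nat) (f : 'I_n -> bipoly k).
Implicit Types (P Q : pred 'I_n) (h : bipoly k) (t : nat).

Lemma in_idealS P Q h : subpred P Q -> in_ideal P f h -> in_ideal Q f h.
Proof.
move=> PQ [g ->]; exists (fun j => if P j then g j else 0).
rewrite big_mkcond [RHS]big_mkcond; apply: eq_bigr => j _.
by case: ifPn => [/PQ -> //|_]; rewrite mul0r if_same.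
Qed.

Lemma in_ideal0 P : in_ideal P f 0.
Proof. by exists (fun=> 0); rewrite big1 // => j _; rewrite mul0r. Qed.

Lemma in_idealD P h1 h2 :
  in_ideal P f h1 -> in_ideal P f h2 -> in_ideal P f (h1 + h2).
Proof.
move=> [g1 ->] [g2 ->]; exists (fun j => g1 j + g2 j).
by rewrite -big_split; apply: eq_bigr => j _; rewrite mulrDl.
Qed.

Lemma in_idealMl P c h : in_ideal P f h -> in_ideal P f (c * h).
Proof.
move=> [g ->]; exists (fun j => c * g j).
by rewrite mulr_sumr; apply: eq_bigr => j _; rewrite mulrA.
Qed.

Lemma in_ideal_gen P j : P j -> in_ideal P f (f j).
Proof.
move=> Pj; exists (fun l => (l == j)%:R); rewrite (bigD1 j) //= eqxx mul1r.
by rewrite big1 ?addr0 // => l /andP [_ /negbTE ->]; rewrite mul0r.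
Qed.

Definition ideal_form P t (v : 'rV[k]_t.+1) : Prop :=
  exists h, homogeneous t h /\ in_ideal P f h /\ form_coords t h = v.

Lemma ideal_form_subspace P t :
  exists U : {vspace 'rV[k]_t.+1}, forall v, v \in U <-> ideal_form P v.
Proof.
apply: vspace_of_pred.
  exists 0; split; first exact: homogeneous0.
  by split; [exact: in_ideal0 | exact: form_coords0].
move=> c _ _ [h1 [t_h1 [P_h1 <-]]] [h2 [t_h2 [P_h2 <-]]].
exists (c%:P%:P * h1 + h2); rewrite form_coordsD form_coordsCM.
split; first by apply: homogeneousD => //; apply: homogeneousCM.
by split=> //; apply: in_idealD => //; apply: in_idealMl.
Qed.

Definition ideal_space P t : {vspace 'rV[k]_t.+1} :=
  epsilon (inhabits 0%VS) (fun U => forall v, v \in U <-> ideal_form P v).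

Lemma ideal_spaceP P t v : v \in ideal_space P t <-> ideal_form P v.
Proof. exact: (epsilon_spec (inhabits 0%VS) _ (ideal_form_subspace P t)). Qed.

Lemma ideal_part_spaceE t : ideal_part_space f t = ideal_space predT t.
Proof. by []. Qed.

Lemma mem_ideal_space P t h :
  homogeneous t h -> in_ideal P f h -> form_coords t h \in ideal_space P t.
Proof. by move=> t_h P_h; apply/ideal_spaceP; exists h. Qed.

Lemma ideal_spaceS P Q t : subpred P Q -> (ideal_space P t <= ideal_space Q t)%VS.
Proof.
move=> PQ; apply/subvP => _ /ideal_spaceP [h [t_h [P_h <-]]].
by apply: mem_ideal_space => //; apply: in_idealS P_h.
Qed.

End Ideal.

Section Generators.
Variables (k : fieldType) (n : nat) (f : 'I_n -> bipoly k) (d : 'I_n -> nat).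
Hypothesis f_homog : forall j, homogeneous (d j) (f j).
Local Notation I t := (ideal_space f predT t).

(* Taking the degree-t component of h = \sum_j g_j f_j only keeps the
   generators of degree at most t. *)
Lemma in_ideal_deg_le t h : homogeneous t h -> in_ideal predT f h ->
  in_ideal [pred j | d j <= t]%N f h.
Proof.
move=> t_h [g hE]; exists (fun j => hcomp (t - d j) (g j)).
rewrite -(hcomp_id t_h) hE (big_morph (hcomp t) (@hcompD k t) (@hcomp0 k t)).
rewrite [RHS]big_mkcond; apply: eq_bigr => j _.
by rewrite (hcompMr t (g j) (@f_homog j)).
Qed.

Lemma ideal_space_padr_padl t :
  (linfun row_padr @: I t + linfun row_padl @: I t
     <= ideal_space f [pred j | d j < t.+1]%N t.+1)%VS.
Proof.
apply/subvP => w /memv_addP [u1 /memv_imgP [v1 /ideal_spaceP Iv1 ->]].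
move=> [u2 /memv_imgP [v2 /ideal_spaceP Iv2 ->] ->].
move: Iv1 Iv2 => [h1 [t_h1 [I_h1 <-]]] [h2 [t_h2 [I_h2 <-]]].
rewrite !lfunE /= -form_coords_xM -form_coords_yM -form_coordsD.
apply: mem_ideal_space.
  by apply: homogeneousD; [apply: homogeneous_xM | apply: homogeneous_yM].
by apply: in_idealD; apply: in_idealMl; apply: in_ideal_deg_le.
Qed.

Hypothesis f_min : minimally_generated f.

Lemma gen_coords_notin P j :
  ~~ P j -> form_coords (d j) (f j) \notin ideal_space f P (d j).
Proof.
move=> nPj; apply/negP => /ideal_spaceP [h [dj_h [P_h hE]]].
apply: (@f_min j); rewrite -(form_coords_inj dj_h (@f_homog j) hE).
by apply: in_idealS P_h => l; apply: contraTneq => ->.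
Qed.

Lemma dimv_ideal_space_gens P t (s : seq 'I_n) : uniq s ->
  (forall j, j \in s -> d j = t /\ ~~ P j) ->
  (\dim (ideal_space f P t) + size s
     <= \dim (ideal_space f [pred j | P j || (j \in s)] t))%N.
Proof.
elim: s => [|j s IHs] /=.
  by rewrite addn0 => _ _; apply/dimvS/ideal_spaceS => l /= ->.
case/andP=> js us sP; have [dj nPj] := sP j (mem_head j s); subst t.
have {}IHs := IHs us (fun l ls => sP l (mem_behead (s := j :: s) ls)).
have gen_new : ~~ (<[form_coords (d j) (f j)]>
                  <= ideal_space f [pred l | P l || (l \in s)] (d j))%VS.
  by rewrite -memvE; apply: gen_coords_notin; rewrite /= negb_or nPj.
rewrite addnS; apply: leq_ltn_trans IHs _.
apply: leq_trans (dimv_addv_gt gen_new) _.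
apply/dimvS; rewrite subv_add; apply/andP; split.
  by apply: ideal_spaceS => l /= /orP [->|ls] //; rewrite in_cons ls !orbT.
rewrite -memvE; apply: mem_ideal_space => //.
by apply: in_ideal_gen; rewrite /= mem_head orbT.
Qed.

Lemma dimv_ideal_part_gens t :
  (\dim (ideal_space f [pred j | d j < t]%N t) + #|[pred j | d j == t]|
     <= \dim (I t))%N.
Proof.
rewrite cardE; apply: leq_trans (dimv_ideal_space_gens (enum_uniq _) _) _.
  by move=> j; rewrite mem_enum inE => /eqP ->; rewrite /= ltnn.
exact/dimvS/ideal_spaceS.
Qed.

Lemma dimv_ideal_part_succ t :
  (\dim (I t) + (0 < \dim (I t)) + #|[pred j | d j == t.+1]| <= \dim (I t.+1))%N.
Proof.
apply: leq_trans (dimv_ideal_part_gens t.+1); rewrite leq_add2r.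
exact: leq_trans (dimv_padr_padl _) (dimvS (ideal_space_padr_padl t)).
Qed.

End Generators.

Lemma sum_ord_eqn (l n : nat) : (\sum_(m < n) (m == l :> nat) = (l < n))%N.
Proof.
elim: n => [|n IHn]; first by rewrite big_ord0.
by rewrite big_ord_recr /= IHn ltnS; case: (ltngtP n l).
Qed.

Lemma sum_ord_ltn (l n : nat) : (\sum_(m < n) (m < l))%N = minn n l.
Proof.
elim: n => [|n IHn]; first by rewrite big_ord0 min0n.
by rewrite big_ord_recr /= IHn; case: ltnP => ln /=; lia.
Qed.

Lemma coef_sum_Xn (R : nzRingType) (n m : nat) :
  (\sum_(l < n) 'X^l : {poly R})`_m = (m < n)%N%:R.
Proof.
rewrite coef_sum -(sum_ord_eqn m n) natr_sum.
by apply: eq_bigr => l _; rewrite coefXn eq_sym.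
Qed.

Section Bound.
Variables (r : nat) (d : 'I_r.+1 -> nat).

Definition count_deg_le t : nat := (\sum_(j < r.+1 | j != ord_max) (d j <= t))%N.

Lemma count_deg_leS t : count_deg_le t.+1 =
  (count_deg_le t + \sum_(j < r.+1 | j != ord_max) (d j == t.+1))%N.
Proof.
rewrite /count_deg_le -big_split; apply: eq_bigr => j _ /=.
by rewrite leq_eqVlt ltnS; case: eqP => [->|_]; rewrite ?ltnn ?addn0.
Qed.

Lemma card_deg_eq t : #|[pred j | d j == t]| =
  ((d ord_max == t) + \sum_(j < r.+1 | j != ord_max) (d j == t))%N.
Proof.
by rewrite -sum1_card big_mkcond (bigD1 ord_max).
Qed.

Lemma bound_coefE i :
  bound_coef d i = (minn i.+1 (d ord_max))%:R - (count_deg_le i)%:R.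
Proof.
rewrite /bound_coef /bound_numerator.
under eq_bigr => m _ do rewrite coefB coef_sum_Xn coef_sum.
rewrite sumrB -sum_ord_ltn /count_deg_le !natr_sum exchange_big /=; congr (_ - _).
apply: eq_bigr => j _.
by rewrite -ltnS -sum_ord_eqn natr_sum; apply: eq_bigr => m _; rewrite coefXn.
Qed.

End Bound.

(* Once t >= d_r the space I_t is nonzero, so each later step gains the extra
   dimension counted by t+1-d_r. *)
Lemma dimv_ideal_part_ge (k : fieldType) (r : nat)
    (f : 'I_r.+1 -> bipoly k) (d : 'I_r.+1 -> nat) :
  (forall j, homogeneous (d j) (f j)) -> minimally_generated f ->
  forall t,
  (count_deg_le d t + (t.+1 - d ord_max) <= \dim (ideal_part_space f t))%N.
Proof.
move=> f_homog f_min; elim=> [|t IHt].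
  have := dimv_ideal_part_gens f_homog f_min 0.
  rewrite card_deg_eq /count_deg_le ideal_part_spaceE => gens0.
  under eq_bigr do rewrite leqn0.
  by move: gens0; case: (d ord_max) => [|e] /=; lia.
have := dimv_ideal_part_succ f_homog f_min t.
rewrite card_deg_eq count_deg_leS; move: IHt; rewrite !ideal_part_spaceE.
by case: posnP => [->|_]; case: eqP => [->|] /=; lia.
Qed.

Theorem mainTheorem1 (k : fieldType) (r : nat)
  (f : 'I_r.+1 -> {poly {poly k}}) (d : 'I_r.+1 -> nat)
  (hhom : forall j, homogeneous (d j) (f j))
  (hdeg : forall i j : 'I_r.+1, (i <= j)%N -> (d j <= d i)%N)
  (hmin : minimally_generated f) :
  forall i : nat, ((hilbert_fun f i)%:Z <= bound_coef d i)%R.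
Proof.
move=> i; rewrite bound_coefE !natz /hilbert_fun.
have := dimv_ideal_part_ge hhom hmin i.
have := dimvS (subvf (ideal_part_space f i)); rewrite dimvf dim_matrix.
lia.
Qed.
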